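(* Let $\rho>0$, $y\in\mathbb{R}^n$, and let $P_y\in\mathbb{R}^{n\times n}$ be any permutation matrix such that $\tilde y=P_y y$ satisfies $\tilde y_1\ge\tilde y_2\ge\cdots\ge\tilde y_n$. Then \[ S_\rho(y)=P_y^T\,\Pi_{\mathcal D}(P_y y-\rho w), \] where $w_k=n-2k+1$, $k=1,\dots,n$.
   Context: For $\rho>0$ and $y\in\mathbb{R}^n$, $S_\rho(y):=\operatorname{argmin}_{x\in\mathbb{R}^n}\big\{\tfrac12\|x-y\|^2+\rho\sum_{1\le i<j\le n}|x_i-x_j|\big\}$. $\mathcal D:=\{x\in\mathbb{R}^n : x_1\ge x_2\ge\cdots\ge x_n\}$ and $\Pi_{\mathcal D}$ is the Euclidean projection onto $\mathcal D$. *)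

From HB Require Import structures.
From mathcomp Require Import all_boot all_order all_algebra all_fingroup.
Set Implicit Arguments. Unset Strict Implicit. Unset Printing Implicit Defensive.
Import Order.TTheory GRing.Theory Num.Theory.
Local Open Scope ring_scope.

Definition sqdist (R : realFieldType) (n : nat) (x y : 'cV[R]_n) : R :=
  \sum_(i < n) (x i 0 - y i 0) ^+ 2.

Definition pairpen (R : realFieldType) (n : nat) (x : 'cV[R]_n) : R :=
  \sum_(i < n) \sum_(j < n | (i < j)%N) `|x i 0 - x j 0|.

Definition Sobj (R : realFieldType) (n : nat) (rho : R) (y x : 'cV[R]_n) : R :=
  2^-1 * sqdist x y + rho * pairpen x.

Definition is_S (R : realFieldType) (n : nat) (rho : R) (y x : 'cV[R]_n) : Prop :=
  forall z : 'cV[R]_n, Sobj rho y x <= Sobj rho y z.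

Definition inD (R : realFieldType) (n : nat) (x : 'cV[R]_n) : Prop :=
  forall i j : 'I_n, (i <= j)%N -> x j 0 <= x i 0.

Definition is_projD (R : realFieldType) (n : nat) (v p : 'cV[R]_n) : Prop :=
  inD p /\ forall q : 'cV[R]_n, inD q -> sqdist v p <= sqdist v q.

(* w_k = n - 2k + 1 for k = 1..n; with 0-based index i = k-1: n - 2i - 1 *)
Definition wvec (R : realFieldType) (n : nat) : 'cV[R]_n :=
  \col_(i < n) (n%:R - (2 * i + 1)%:R).

From HB Require Import structures.
From mathcomp Require Import all_boot all_order all_algebra all_fingroup.
From mathcomp Require Import ring lra zify.
Set Implicit Arguments. Unset Strict Implicit. Unset Printing Implicit Defensive.
Import Order.TTheory GRing.Theory Num.Theory.
Local Open Scope ring_scope.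

(* The objective is invariant under simultaneous permutation of x and y, and
   for sorted y, sorting a candidate x only brings it closer to y (rearrangement
   inequality), so the minimum may be sought in D.  On D the penalty is the
   linear form <w, x>, and completing the square turns the problem into the
   projection of y - rho w onto D.  That projection is built by pooling adjacent
   violators and certified through Abel summation; the minimiser is unique since
   the objective is strongly convex. *)

Section NatSequences.
Variable R : realFieldType.
Implicit Types (f g v p q z : nat -> R) (n k K : nat) (mu : R).

Definition prefix_sum f k : R := \sum_(0 <= i < k) f i.

Definition nonincreasing_upto n f : Prop :=
  forall i j, (i <= j)%N -> (j < n)%N -> f j <= f i.

Lemma eq_prefix_sum f g k :
  (forall i, (i < k)%N -> f i = g i) -> prefix_sum f k = prefix_sum g k.
Proof. by move=> fg; apply: eq_big_nat => i /andP[_ /fg]. Qed.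

Lemma prefix_sumD f k K :
  prefix_sum f (K + k) = prefix_sum f K + prefix_sum (fun i => f (K + i)%N) k.
Proof.
elim: k => [|k IH]; first by rewrite addn0 /prefix_sum [X in _ + X]big_geq ?addr0.
by rewrite addnS /prefix_sum !big_nat_recr //= -!/(prefix_sum _ _) IH addrA.
Qed.

Lemma prefix_sumB f g k :
  prefix_sum (fun i => f i - g i) k = prefix_sum f k - prefix_sum g k.
Proof. exact: sumrB. Qed.

Lemma prefix_sumN f k : prefix_sum (fun i => - f i) k = - prefix_sum f k.
Proof. exact: sumrN. Qed.

Lemma prefix_sum_const f mu k :
  (forall i, (i < k)%N -> f i = mu) -> prefix_sum f k = k%:R * mu.
Proof.
move=> fE; rewrite (eq_prefix_sum (g := fun=> mu)) //.
by rewrite /prefix_sum sumr_const_nat subn0 mulr_natl.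
Qed.

Lemma summation_by_parts z f m :
  \sum_(0 <= i < m.+1) z i * f i =
  z m * prefix_sum f m.+1 + \sum_(0 <= k < m) (z k - z k.+1) * prefix_sum f k.+1.
Proof.
elim: m => [|m IH]; first by rewrite /prefix_sum !big_nat1 big_geq // addr0.
have -> : prefix_sum f m.+2 = prefix_sum f m.+1 + f m.+1.
  by rewrite /prefix_sum big_nat_recr.
by rewrite big_nat_recr //= IH (big_nat_recr m) //=; ring.
Qed.

Lemma sum_mul_nonincreasing_ge0 n z f :
  nonincreasing_upto n z -> prefix_sum f n = 0 ->
  (forall k, (k.+1 < n)%N -> 0 <= prefix_sum f k.+1) ->
  0 <= \sum_(0 <= i < n) z i * f i.
Proof.
case: n => [|m] zdec f0 fge0; first by rewrite big_geq.
rewrite summation_by_parts f0 mulr0 add0r big_seq.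
apply: sumr_ge0 => k; rewrite mem_iota add0n subn0 => /andP[_ km].
by rewrite mulr_ge0 ?fge0 // subr_ge0 zdec.
Qed.

Lemma sum_mul_nonincreasing_eq0 n z f :
  nonincreasing_upto n z -> prefix_sum f n = 0 ->
  (forall k, (k.+1 < n)%N -> z k.+1 < z k -> prefix_sum f k.+1 = 0) ->
  \sum_(0 <= i < n) z i * f i = 0.
Proof.
case: n => [|m] zdec f0 fjump; first by rewrite big_geq.
rewrite summation_by_parts f0 mulr0 add0r.
apply: big1_seq => k; rewrite mem_iota add0n subn0 => /andP[_ km].
have [zlt|zge] := ltP (z k.+1) (z k); first by rewrite fjump ?mulr0.
have -> : z k = z k.+1 by apply/eqP; rewrite eq_le zge zdec.
by rewrite subrr mul0r.
Qed.

(* Optimality conditions for the projection p of v onto the nonincreasing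
   sequences: the prefix sums of the residual are nonpositive, and vanish at
   the end and at every strict descent of p, i.e. at every block boundary. *)
Definition monotone_fit n v p : Prop :=
  [/\ nonincreasing_upto n p,
      forall k, (k <= n)%N -> prefix_sum (fun i => v i - p i) k <= 0,
      prefix_sum (fun i => v i - p i) n = 0
    & forall k, (k.+1 < n)%N -> p k.+1 < p k ->
        prefix_sum (fun i => v i - p i) k.+1 = 0].

Lemma monotone_fit_pythagoras n v p q :
  monotone_fit n v p -> nonincreasing_upto n q ->
  \sum_(0 <= i < n) (v i - p i) ^+ 2 + \sum_(0 <= i < n) (p i - q i) ^+ 2 <=
  \sum_(0 <= i < n) (v i - q i) ^+ 2.
Proof.
move=> [pdec rle0 rn0 rjump] qdec.
have orth : \sum_(0 <= i < n) p i * (v i - p i) = 0.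
  exact: sum_mul_nonincreasing_eq0.
have obtuse : 0 <= \sum_(0 <= i < n) q i * - (v i - p i).
  apply: sum_mul_nonincreasing_ge0 => //; first by rewrite prefix_sumN rn0 oppr0.
  by move=> k kn; rewrite prefix_sumN oppr_ge0 rle0 // ltnW.
have -> : \sum_(0 <= i < n) (v i - q i) ^+ 2 =
    \sum_(0 <= i < n) (v i - p i) ^+ 2 + \sum_(0 <= i < n) (p i - q i) ^+ 2
    + 2 * \sum_(0 <= i < n) p i * (v i - p i)
    + 2 * \sum_(0 <= i < n) q i * - (v i - p i).
  by rewrite !mulr_sumr -!big_split /=; apply: eq_bigr => i _; ring.
rewrite orth; lra.
Qed.

(* One step of the pool-adjacent-violators algorithm. *)
Definition pool K mu q i : R := if (i < K)%N then mu else q (i - K)%N.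

Lemma prefix_sum_pool_head v K mu q k : (k <= K)%N ->
  prefix_sum (fun i => v i - pool K mu q i) k = prefix_sum v k - k%:R * mu.
Proof.
move=> kK; rewrite prefix_sumB; congr (_ - _).
by apply: prefix_sum_const => i ik; rewrite /pool (leq_trans ik kK).
Qed.

Lemma prefix_sum_pool_tail v K mu q k :
  prefix_sum v K = K%:R * mu -> (K <= k)%N ->
  prefix_sum (fun i => v i - pool K mu q i) k =
  prefix_sum (fun i => v (K + i)%N - q i) (k - K).
Proof.
move=> vK Kk; rewrite -{1}(subnKC Kk) prefix_sumD prefix_sum_pool_head //.
rewrite -vK subrr add0r; apply: eq_prefix_sum => i _.
by rewrite /pool ltnNge leq_addr /= addKn.
Qed.

Lemma monotone_fit_pool n v K mu q :
  (0 < K <= n)%N -> prefix_sum v K = K%:R * mu ->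
  (forall k, (k <= n)%N -> prefix_sum v k <= k%:R * mu) ->
  monotone_fit (n - K) (fun i => v (K + i)%N) q ->
  (forall j, (j < n - K)%N -> q j <= mu) ->
  monotone_fit n v (pool K mu q).
Proof.
move=> /andP[K0 Kn] vK vle [qdec qle0 qn0 qjump] qmu.
have tail k := @prefix_sum_pool_tail v K mu q k vK.
split.
- move=> i j ij jn; rewrite /pool.
  case: (ltnP j K) => jK; first by rewrite (leq_ltn_trans ij jK).
  case: (ltnP i K) => iK; first by apply: qmu; lia.
  by apply: qdec; lia.
- move=> k kn; case: (leqP k K) => kK.
    by rewrite prefix_sum_pool_head // subr_le0 vle.
  by rewrite tail ?qle0 //; lia.
- by rewrite tail.
- move=> k kn; case: (ltngtP k.+1 K) => [kK|Kk|Kk].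
  + by rewrite /pool kK (ltn_trans (ltnSn k) kK) ltxx.
  + rewrite tail 1?ltnW // /pool.
    have Kk' : (K <= k)%N by rewrite -ltnS.
    rewrite (ltnNge k.+1) (ltnNge k) Kk' (leqW Kk') /= subSn //.
    by move=> qlt; apply: qjump; lia.
  + by rewrite Kk prefix_sum_pool_head // vK subrr.
Qed.

(* The first block is the longest prefix of maximal average; its value bounds
   every later value, which is what keeps the pooled sequence nonincreasing. *)
Lemma monotone_fit_exists n v : exists p,
  monotone_fit n v p /\
  forall M, (0 < n)%N -> (forall k, (0 < k <= n)%N -> prefix_sum v k <= k%:R * M) ->
  p 0%N <= M.
Proof.
elim/ltn_ind: n v => -[_ v|m IH v].
  exists (fun=> 0); split=> //; split; rewrite /prefix_sum ?big_geq //.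
  by move=> k; rewrite leqn0 => /eqP ->; rewrite big_geq.
pose avg (i : 'I_m.+1) := prefix_sum v i.+1 / i.+1%:R.
case: (arg_maxP avg (isT : xpredT ord0)) => i0 _ i0max.
set K := i0.+1; set mu := avg i0.
have vK : prefix_sum v K = K%:R * mu by rewrite mulrC divfK ?pnatr_eq0.
have vle k : (k <= m.+1)%N -> prefix_sum v k <= k%:R * mu.
  case: k => [_|k km]; first by rewrite /prefix_sum big_geq ?mul0r.
  by have := i0max (Ordinal km) isT; rewrite [avg _]/avg /= ler_pdivrMr ?ltr0n // mulrC.
have [q [qfit qbound]] := IH (m.+1 - K)%N (ltn_subrL _ _) (fun i => v (K + i)%N).
have qmu j : (j < m.+1 - K)%N -> q j <= mu.
  move=> jn; have [qdec _ _ _] := qfit.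
  apply: le_trans (qdec 0%N j isT jn) _.
  apply: qbound; first exact: leq_ltn_trans jn.
  move=> k /andP[_ kn]; have /vle : (K + k <= m.+1)%N by lia.
  by rewrite prefix_sumD vK natrD mulrDl lerD2l.
exists (pool K mu q); split; first by apply: monotone_fit_pool; rewrite ?ltn_ord.
by move=> M _ vM; have := vM K (ltn_ord i0); rewrite vK ler_pM2l ?ltr0n.
Qed.

Lemma sum_pairwise_diff n z :
  \sum_(0 <= i < n) \sum_(0 <= j < n | (i < j)%N) (z i - z j) =
  \sum_(0 <= i < n) (n%:R - (2 * i + 1)%:R) * z i.
Proof.
elim: n => [|n IH]; first by rewrite !big_geq.
have inner i : (0 <= i < n)%N ->
    \sum_(0 <= j < n.+1 | (i < j)%N) (z i - z j) =
    \sum_(0 <= j < n | (i < j)%N) (z i - z j) + (z i - z n).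
  by move=> /andP[_ ilt]; rewrite big_mkcond big_nat_recr //= -big_mkcond ilt.
have last0 : \sum_(0 <= j < n.+1 | (n < j)%N) (z n - z j) = 0.
  by rewrite big_nat_cond big1 // => j /andP[/andP[_ jn] nj]; lia.
rewrite big_nat_recr //= [RHS]big_nat_recr //= (eq_big_nat _ _ inner) last0.
rewrite addr0 big_split /= IH sumrB sumr_const_nat subn0.
have -> : \sum_(0 <= i < n) (n.+1%:R - (2 * i + 1)%:R) * z i =
    \sum_(0 <= i < n) (n%:R - (2 * i + 1)%:R) * z i + \sum_(0 <= i < n) z i.
  by rewrite -big_split /=; apply: eq_bigr => i _; rewrite mulrS; ring.
by rewrite -mulr_natl natrD natrM mulrS; ring.
Qed.

End NatSequences.

Section Columns.
Variables (R : realFieldType) (n : nat).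
Implicit Types (x y u c : 'cV[R]_n) (s : 'S_n).

Definition coord_nat x (i : nat) : R := if insub i is Some j then x j 0 else 0.

Lemma coord_natE x (j : 'I_n) : coord_nat x j = x j 0.
Proof. by rewrite /coord_nat valK. Qed.

Lemma sqdist_coord_nat x y :
  sqdist x y = \sum_(0 <= i < n) (coord_nat x i - coord_nat y i) ^+ 2.
Proof. by rewrite big_mkord; apply: eq_bigr => i _; rewrite !coord_natE. Qed.

Lemma inD_nonincreasing x : inD x <-> nonincreasing_upto n (coord_nat x).
Proof.
split=> [xD i j ij jn | xdec i j ij]; last by rewrite -!coord_natE xdec.
have iltn := leq_ltn_trans ij jn.
by rewrite -[i]/(val (Ordinal iltn)) -[j]/(val (Ordinal jn)) !coord_natE xD.
Qed.

Lemma sqdist_ge0 x y : 0 <= sqdist x y.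
Proof. by apply: sumr_ge0 => i _; apply: sqr_ge0. Qed.

Lemma sqdist_le0 x y : sqdist x y <= 0 -> x = y.
Proof.
move=> le0; have /eqP : sqdist x y = 0 by apply/eqP; rewrite eq_le le0 sqdist_ge0.
rewrite psumr_eq0 => [/allP xy|i _]; last exact: sqr_ge0.
apply/matrixP => i j; rewrite (ord1 j).
by have /implyP/(_ isT) := xy i (mem_index_enum _); rewrite sqrf_eq0 subr_eq0 => /eqP.
Qed.

Lemma projD_exists_unique u :
  exists p, is_projD u p /\ forall q, is_projD u q -> q = p.
Proof.
have [f [ffit _]] := monotone_fit_exists n (coord_nat u).
pose p : 'cV[R]_n := \col_(i < n) f i.
have pf i : (i < n)%N -> coord_nat p i = f i.
  by move=> iltn; rewrite -[i]/(val (Ordinal iltn)) coord_natE mxE.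
have sum_pf (F : nat -> R -> R) :
    \sum_(0 <= i < n) F i (coord_nat p i) = \sum_(0 <= i < n) F i (f i).
  by apply: eq_big_nat => i /andP[_ /pf ->].
have pD : inD p.
  apply/inD_nonincreasing => i j ij jn.
  by rewrite !pf ?(leq_ltn_trans ij jn) //; case: ffit => + _ _ _; apply.
have pyth q : inD q -> sqdist u p + sqdist p q <= sqdist u q.
  move=> /inD_nonincreasing qdec; rewrite !sqdist_coord_nat.
  rewrite (sum_pf (fun i t => (coord_nat u i - t) ^+ 2)).
  rewrite (sum_pf (fun i t => (t - coord_nat q i) ^+ 2)).
  exact: monotone_fit_pythagoras.
have pproj : is_projD u p.
  split=> // q qD; apply: le_trans (pyth q qD); rewrite lerDl; exact: sqdist_ge0.
exists p; split=> // q [qD qmin].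
have := pyth q qD; have := qmin p pD => h h'.
by apply/esym/sqdist_le0; lra.
Qed.

Lemma perm_mx_mulE s x i : (perm_mx s *m x) i 0 = x (s i) 0.
Proof. by rewrite -row_permE mxE. Qed.

Lemma sqdist_perm s x y :
  sqdist (perm_mx s *m x) (perm_mx s *m y) = sqdist x y.
Proof.
rewrite /sqdist (reindex_inj (@perm_inj _ s^-1)) /=.
by apply: eq_bigr => i _; rewrite !perm_mx_mulE !permKV.
Qed.

Lemma sum_all_pairs x : \sum_i \sum_j `|x i 0 - x j 0| = 2 * pairpen x.
Proof.
pose f (i j : 'I_n) := `|x i 0 - x j 0|.
have split_diag i :
    \sum_j f i j = \sum_(j : 'I_n | (i < j)%N) f i j + \sum_(j : 'I_n | (j < i)%N) f i j.
  rewrite (bigID (fun j : 'I_n => (i < j)%N)) /=; congr (_ + _).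
  rewrite (bigID (fun j : 'I_n => (j < i)%N)) /= [X in _ + X]big1 ?addr0.
    by apply: eq_bigl => j; case: ltngtP.
  by move=> j; case: ltngtP => // /val_inj -> _; rewrite /f subrr normr0.
rewrite (eq_bigr _ (fun i _ => split_diag i)) big_split /= mulr2n mulrDl mul1r.
congr (_ + _); rewrite (exchange_big_dep xpredT) //=.
by apply: eq_bigr => i _; apply: eq_bigr => j _; rewrite /f distrC.
Qed.

Lemma pairpen_perm s x : pairpen (perm_mx s *m x) = pairpen x.
Proof.
apply: (@mulfI _ 2); first by rewrite pnatr_eq0.
rewrite -!sum_all_pairs (reindex_inj (@perm_inj _ s^-1)) /=.
apply: eq_bigr => i _; rewrite (reindex_inj (@perm_inj _ s^-1)) /=.
by apply: eq_bigr => j _; rewrite !perm_mx_mulE !permKV.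
Qed.

End Columns.

Section Rearrangement.
Variables (R : realFieldType) (n : nat).
Implicit Types (x y u z c : 'cV[R]_n) (s : 'S_n).

Lemma exists_sorting_perm x : exists s, inD (perm_mx s *m x).
Proof.
pose ge (a b : R) := b <= a.
pose t := [tuple x i 0 | i < n].
have [s tsorted] := tuple_permP (permEl (perm_sort ge t)).
have sorted_t : sorted ge (sort ge t) by apply: sort_sorted => a b; exact: le_total.
exists s => i j ij; rewrite !perm_mx_mulE.
have sE k : x (s k) 0 = nth 0 (sort ge t) k.
  by rewrite tsorted -tnth_nth !tnth_mktuple.
rewrite !sE; apply: (sorted_leq_nth _ _ _ sorted_t) => //.
- by move=> a b d ba db; exact: le_trans db ba.
- by move=> a; exact: le_refl.
- by rewrite inE size_sort size_tuple.
- by rewrite inE size_sort size_tuple.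
Qed.

(* Shifting c by its K-th value makes the first K entries nonnegative and the
   others nonpositive, so no reordering can increase the sum of the first K. *)
Lemma sum_prefix_perm_le c s K : inD c -> (K <= n)%N ->
  \sum_(i < n | (i < K)%N) c (s i) 0 <= \sum_(i < n | (i < K)%N) c i 0.
Proof.
move=> cD; case: K => [_|k kn]; first by rewrite !big1 // => i; rewrite ltn0.
pose f (i : 'I_n) := c i 0 - c (Ordinal kn) 0.
have shift (g : 'I_n -> 'I_n) : \sum_(i < n | (i < k.+1)%N) c (g i) 0 =
    \sum_(i < n | (i < k.+1)%N) f (g i) + \sum_(i < n | (i < k.+1)%N) c (Ordinal kn) 0.
  by rewrite -big_split /=; apply: eq_bigr => i _; rewrite /f subrK.
rewrite (shift s) (shift id) lerD2r.
have f_ge0 (i : 'I_n) : (i < k.+1)%N -> 0 <= f i by by rewrite subr_ge0 => ik; apply: cD.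
have f_le0 (i : 'I_n) : ~~ (i < k.+1)%N -> f i <= 0.
  by rewrite -leqNgt subr_le0 => ki; apply: cD; apply: ltnW.
pose g (i : 'I_n) := if (s i < k.+1)%N then f (s i) else 0.
apply: (@le_trans _ _ (\sum_(i < n | (i < k.+1)%N) g i)).
  by apply: ler_sum => i _; rewrite /g; case: ifPn => // /f_le0.
apply: (@le_trans _ _ (\sum_(i < n) g i)).
  rewrite [X in _ <= X](bigID (fun i : 'I_n => (i < k.+1)%N)) /= lerDl.
  by apply: sumr_ge0 => i _; rewrite /g; case: ifP => // /f_ge0.
by rewrite [in X in _ <= X]big_mkcond [in X in _ <= X](reindex_inj (@perm_inj _ s)).
Qed.

Lemma rearrangement_le z c s : inD z -> inD c ->
  \sum_i z i 0 * c (s i) 0 <= \sum_i z i 0 * c i 0.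
Proof.
move=> zD cD.
pose a k := coord_nat c k - coord_nat (perm_mx s *m c) k.
have prefix_a K : (K <= n)%N -> prefix_sum a K =
    \sum_(i < n | (i < K)%N) c i 0 - \sum_(i < n | (i < K)%N) c (s i) 0.
  move=> Kn; rewrite /prefix_sum (big_nat_widen _ _ _ _ _ Kn) big_mkord -sumrB.
  by apply: eq_bigr => i _; rewrite /a !coord_natE perm_mx_mulE.
have : 0 <= \sum_(0 <= i < n) coord_nat z i * a i.
  apply: sum_mul_nonincreasing_ge0; first exact/inD_nonincreasing.
    apply/eqP; rewrite prefix_a // subr_eq0 (reindex_inj (@perm_inj _ s)) /=.
    by apply/eqP/eq_bigl => i; rewrite !ltn_ord.
  by move=> k kn; rewrite prefix_a 1?ltnW // subr_ge0 sum_prefix_perm_le 1?ltnW.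
rewrite big_mkord (eq_bigr (fun i : 'I_n => z i 0 * c i 0 - z i 0 * c (s i) 0)).
  by rewrite sumrB subr_ge0.
by move=> i _; rewrite /a !coord_natE perm_mx_mulE mulrBr.
Qed.

Lemma sqdist_sort_le y u s : inD y -> inD (perm_mx s *m u) ->
  sqdist (perm_mx s *m u) y <= sqdist u y.
Proof.
move=> yD suD; rewrite -(sqdist_perm s u y).
have sqdistE (a b : 'cV[R]_n) :
    sqdist a b = \sum_i a i 0 ^+ 2 - 2 * \sum_i a i 0 * b i 0 + \sum_i b i 0 ^+ 2.
  by rewrite mulr_sumr -sumrB -big_split /=; apply: eq_bigr => i _; ring.
have sq_perm : \sum_i (perm_mx s *m y) i 0 ^+ 2 = \sum_i y i 0 ^+ 2.
  rewrite [RHS](reindex_inj (@perm_inj _ s)).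
  by apply: eq_bigr => i _; rewrite perm_mx_mulE.
have := rearrangement_le s suD yD.
under [X in X <= _ -> _]eq_bigr do rewrite -perm_mx_mulE.
rewrite !sqdistE sq_perm; lra.
Qed.

End Rearrangement.

Section Objective.
Variables (R : realFieldType) (n : nat) (rho : R).
Implicit Types (x y u z : 'cV[R]_n) (s : 'S_n).

Lemma wvec_dotE x :
  \sum_i wvec R n i 0 * x i 0 = \sum_(i < n) \sum_(j < n | (i < j)%N) (x i 0 - x j 0).
Proof.
transitivity
  (\sum_(0 <= i < n) \sum_(0 <= j < n | (i < j)%N) (coord_nat x i - coord_nat x j)).
  by rewrite sum_pairwise_diff big_mkord; apply: eq_bigr => i _; rewrite mxE coord_natE.
rewrite big_mkord; apply: eq_bigr => i _; rewrite big_mkord.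
by apply: eq_bigr => j _; rewrite !coord_natE.
Qed.

Lemma wvec_dot_le_pairpen x : \sum_i wvec R n i 0 * x i 0 <= pairpen x.
Proof.
by rewrite wvec_dotE; apply: ler_sum => i _; apply: ler_sum => j _; apply: ler_norm.
Qed.

Lemma pairpen_inD x : inD x -> pairpen x = \sum_i wvec R n i 0 * x i 0.
Proof.
move=> xD; apply/eqP; rewrite eq_le wvec_dot_le_pairpen andbT wvec_dotE.
rewrite /pairpen; apply: ler_sum => i _; apply: ler_sum => j ij.
by rewrite ger0_norm // subr_ge0 xD // ltnW.
Qed.

Lemma Sobj_perm s y x :
  Sobj rho (perm_mx s *m y) (perm_mx s *m x) = Sobj rho y x.
Proof. by rewrite /Sobj sqdist_perm pairpen_perm. Qed.

Lemma Sobj_sort_le y u : inD y -> exists2 z, inD z & Sobj rho y z <= Sobj rho y u.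
Proof.
move=> yD; have [s suD] := exists_sorting_perm u.
exists (perm_mx s *m u) => //.
by rewrite /Sobj pairpen_perm lerD2r ler_pM2l ?invr_gt0 ?ltr0n // sqdist_sort_le.
Qed.

(* On D the penalty is linear, so completing the square leaves a constant c
   that does not depend on the candidate. *)
Lemma Sobj_inD_le y z z' : inD z -> inD z' ->
  (Sobj rho y z <= Sobj rho y z') =
  (sqdist (y - rho *: wvec R n) z <= sqdist (y - rho *: wvec R n) z').
Proof.
set c := \sum_i (rho * (wvec R n i 0 * y i 0) - 2^-1 * rho ^+ 2 * wvec R n i 0 ^+ 2).
have SobjE x : inD x -> Sobj rho y x = 2^-1 * sqdist (y - rho *: wvec R n) x + c.
  move=> xD; rewrite /Sobj pairpen_inD // /sqdist !mulr_sumr -!big_split /=.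
  by apply: eq_bigr => i _; rewrite !mxE; field.
by move=> zD z'D; rewrite !SobjE // lerD2r ler_pM2l ?invr_gt0 ?ltr0n.
Qed.

Lemma Sobj_midpoint y a b : 0 <= rho ->
  Sobj rho y (2^-1 *: (a + b)) <=
  2^-1 * (Sobj rho y a + Sobj rho y b) - 8^-1 * sqdist a b.
Proof.
move=> rho_ge0.
have sqdist_mid : 2^-1 * sqdist (2^-1 *: (a + b)) y =
    4^-1 * sqdist a y + 4^-1 * sqdist b y - 8^-1 * sqdist a b.
  rewrite /sqdist !mulr_sumr -big_split -sumrB /=.
  by apply: eq_bigr => i _; rewrite !mxE; field.
have pairpen_mid : pairpen (2^-1 *: (a + b)) <= 2^-1 * pairpen a + 2^-1 * pairpen b.
  rewrite /pairpen !mulr_sumr -big_split /=; apply: ler_sum => i _.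
  rewrite !mulr_sumr -big_split /=; apply: ler_sum => j _; rewrite !mxE -mulrDr.
  rewrite -mulrBr normrM ger0_norm ?invr_ge0 ?ler0n // ler_wpM2l ?invr_ge0 ?ler0n //.
  by rewrite opprD addrACA ler_normD.
have := ler_wpM2l rho_ge0 pairpen_mid.
rewrite /Sobj sqdist_mid; lra.
Qed.

Lemma is_S_unique y x x' : 0 <= rho -> is_S rho y x -> is_S rho y x' -> x = x'.
Proof.
move=> rho_ge0 xmin x'min; apply: sqdist_le0.
have := Sobj_midpoint y x x' rho_ge0; have := xmin (2^-1 *: (x + x')).
have := xmin x'; have := x'min x; have := sqdist_ge0 x x'; lra.
Qed.

End Objective.

Theorem mainTheorem3 (R : realFieldType) (n : nat) (rho : R) (y : 'cV[R]_n)
    (s : 'S_n) :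
  0 < rho ->
  inD (perm_mx s *m y) ->
  exists p : 'cV[R]_n,
    [/\ is_projD (perm_mx s *m y - rho *: wvec R n) p,
        (forall q, is_projD (perm_mx s *m y - rho *: wvec R n) q -> q = p)
      & (forall x : 'cV[R]_n, is_S rho y x <-> x = (perm_mx s)^T *m p)].
Proof.
move=> rho_gt0 yD.
have [p [[pD pmin] puniq]] := projD_exists_unique (perm_mx s *m y - rho *: wvec R n).
exists p; split=> //.
have pE : perm_mx s *m ((perm_mx s)^T *m p) = p.
  by rewrite tr_perm_mx mulmxA -perm_mxM mulgV perm_mx1 mul1mx.
have pS : is_S rho y ((perm_mx s)^T *m p).
  move=> x; rewrite -(Sobj_perm rho s) -[Sobj rho y x](Sobj_perm rho s) pE.
  have [z zD zle] := Sobj_sort_le rho (perm_mx s *m x) yD.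
  by apply: le_trans zle; rewrite Sobj_inD_le // pmin.
by move=> x; split=> [xS|->//]; apply: is_S_unique (ltW rho_gt0) xS pS.
Qed.
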